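(* With $B_n,P_n$ as in the context, the block lengths $L_n=|B_n|$ grow exponentially in $n$, and the pillar lengths $m_n=|P_n|$ also grow exponentially in $n$.
   Context: Generation operator: for a finite vector $R=\langle r_1,\dots,r_m\rangle$ of positive integers and $s\in\{1,3\}$, $\mathcal{G}(R,s)= s^{r_1}\,(4-s)^{r_2}\,s^{r_3}\cdots$ (the $i$-th run consists of $r_i$ copies of $s$ if $i$ is odd and of $4-s$ if $i$ is even), of length $\sum_i r_i$. For a finite word $W$ over $\{1,3\}$, $R(W)$ denotes $W$ itself regarded as a vector of positive integers. Define $B_1=\mathcal{G}(\langle 1,3,3,3,1\rangle,1)=1\,3\,3\,3\,1\,1\,1\,3\,3\,3\,1$, $P_1=3$, and for $n\ge1$: $B_{n+1}=B_n\,P_n\,B_n$ (concatenation), $P_{n+1}=\mathcal{G}(R(P_n),3)$. ''Grows exponentially'' means bounded below by $C\gamma^n$ for some constants $C>0$, $\gamma>1$. *)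

From Stdlib Require Import Reals List Arith.
Import ListNotations.
Open Scope R_scope.

(* Generation operator G(R, s): the i-th run consists of r_i copies of s
   (i odd) or of 4 - s (i even). *)
Fixpoint gen (R : list nat) (s : nat) : list nat :=
  match R with
  | nil => nil
  | r :: R' => repeat s r ++ gen R' (4 - s)
  end.

Definition B1 : list nat := gen [1; 3; 3; 3; 1]%nat 1.
Definition P1 : list nat := [3%nat].

(* BP k = (B_{k+1}, P_{k+1}) *)
Fixpoint BP (k : nat) : list nat * list nat :=
  match k with
  | O => (B1, P1)
  | S k' => let (b, p) := BP k' in (b ++ p ++ b, gen p 3)
  end.

Definition B (n : nat) : list nat := fst (BP (n - 1)).
Definition P (n : nat) : list nat := snd (BP (n - 1)).

Definition grows_exponentially (f : nat -> R) : Prop :=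
  exists C gamma : R, 0 < C /\ 1 < gamma /\
    forall n : nat, (1 <= n)%nat -> C * gamma ^ n <= f n.

Lemma B1_check : B1 = [1;3;3;3;1;1;1;3;3;3;1]%nat.
Proof. reflexivity. Qed.

(** The pillars are iterated run-length decodings: [|P_{n+1}|] is the digit
    sum of [P_n].  Since [P_n = G(P_{n-1}, 3)] has runs of length 1 to 3
    starting with a run of 3s, each run of 1s is at most three times as long
    as the run of 3s before it, so 3s make up at least a quarter of [P_n] and
    its digit sum is at least [3/2 |P_n|].  The blocks satisfy
    [L_{n+1} = 2 L_n + m_n >= 2 L_n]. *)

From Stdlib Require Import Reals List.
From Stdlib Require Import Lia Lra.
Import ListNotations.

Lemma grows_exponentially_geometric (f : nat -> R) (gamma : R) :
  1 < gamma -> 0 < f 1%nat ->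
  (forall n, (1 <= n)%nat -> gamma * f n <= f (S n)) ->
  grows_exponentially f.
Proof.
  intros Hgamma Hf1 Hstep.
  exists (f 1%nat / gamma), gamma; split; [apply Rdiv_lt_0_compat; lra|].
  split; [exact Hgamma|].
  induction n as [|n IH]; intros Hn; [lia|].
  destruct (Nat.eq_dec n 0) as [->|Hn0].
  - simpl; field_simplify; lra.
  - specialize (IH ltac:(lia)); specialize (Hstep n ltac:(lia)).
    replace (f 1%nat / gamma * gamma ^ S n)
      with (gamma * (f 1%nat / gamma * gamma ^ n)) by (simpl; ring).
    apply Rle_trans with (gamma * f n); [apply Rmult_le_compat_l; lra|].
    exact Hstep.
Qed.

Lemma length_gen (R : list nat) (s : nat) : length (gen R s) = list_sum R.
Proof.
  revert s; induction R as [|r R IH]; intros s; simpl; [reflexivity|].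
  now rewrite length_app, repeat_length, IH.
Qed.

Lemma gen_letters (R : list nat) (s : nat) :
  (1 <= s <= 3)%nat -> Forall (fun x => 1 <= x <= 3)%nat (gen R s).
Proof.
  revert s; induction R as [|r R IH]; intros s Hs; cbn [gen]; [constructor|].
  apply Forall_app; split.
  - apply Forall_forall; intros x Hx; now apply repeat_spec in Hx as ->.
  - apply IH; lia.
Qed.

Lemma list_sum_repeat (s n : nat) : list_sum (repeat s n) = (s * n)%nat.
Proof. induction n as [|n IH]; simpl; lia. Qed.

Lemma gen_sum_bounds (R : list nat) :
  Forall (fun r => 1 <= r <= 3)%nat R ->
  (3 * length (gen R 3) <= 2 * list_sum (gen R 3))%nat /\
  (3 * length (gen R 1) <= 2 * list_sum (gen R 1) + 3)%nat.
Proof.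
  induction R as [|r R IH]; intros HR; simpl; [lia|].
  apply Forall_cons_iff in HR as [Hr HR]; destruct (IH HR) as [H3 H1].
  rewrite !length_app, !list_sum_app, !repeat_length, !list_sum_repeat.
  simpl (4 - 3)%nat; simpl (4 - 1)%nat; lia.
Qed.

Lemma B_succ (n : nat) : (1 <= n)%nat -> B (S n) = B n ++ P n ++ B n.
Proof.
  intros Hn; unfold B, P; replace (S n - 1)%nat with (S (n - 1)) by lia.
  simpl; now destruct (BP (n - 1)).
Qed.

Lemma P_succ (n : nat) : (1 <= n)%nat -> P (S n) = gen (P n) 3.
Proof.
  intros Hn; unfold P; replace (S n - 1)%nat with (S (n - 1)) by lia.
  simpl; now destruct (BP (n - 1)).
Qed.

Lemma P_letters (n : nat) : Forall (fun x => 1 <= x <= 3)%nat (P n).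
Proof.
  destruct (Nat.le_gt_cases n 1) as [Hn|Hn].
  - unfold P; replace (n - 1)%nat with 0%nat by lia.
    simpl; constructor; [lia | constructor].
  - replace n with (S (n - 1)) by lia; rewrite P_succ by lia.
    apply gen_letters; lia.
Qed.

Lemma P_eq_gen (n : nat) :
  (1 <= n)%nat -> exists Q, Forall (fun r => 1 <= r <= 3)%nat Q /\ P n = gen Q 3.
Proof.
  intros Hn; destruct (Nat.eq_dec n 1) as [->|Hn1].
  - exists [1%nat]; split; [constructor; [lia | constructor] | reflexivity].
  - exists (P (n - 1)); split; [apply P_letters|].
    replace n with (S (n - 1)) at 1 by lia; apply P_succ; lia.
Qed.

Lemma length_B_succ (n : nat) :
  (1 <= n)%nat -> (2 * length (B n) <= length (B (S n)))%nat.
Proof. intros Hn; rewrite B_succ, !length_app by exact Hn; lia. Qed.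

Lemma length_P_succ (n : nat) :
  (1 <= n)%nat -> (3 * length (P n) <= 2 * length (P (S n)))%nat.
Proof.
  intros Hn; rewrite P_succ, length_gen by exact Hn.
  destruct (P_eq_gen n Hn) as [Q [HQ ->]].
  now apply gen_sum_bounds.
Qed.

Lemma INR_le_ratio (a b p q : nat) :
  (0 < q)%nat -> (p * a <= q * b)%nat -> INR p / INR q * INR a <= INR b.
Proof.
  intros Hq Hab; apply le_INR in Hab; rewrite !mult_INR in Hab.
  assert (0 < INR q) by (apply lt_0_INR; lia).
  apply Rmult_le_reg_l with (INR q); [assumption|].
  field_simplify; lra.
Qed.

Theorem proposition5p2 :
  grows_exponentially (fun n => INR (length (B n))) /\
  grows_exponentially (fun n => INR (length (P n))).
Proof.
  split.
  - apply grows_exponentially_geometric with (gamma := INR 2 / INR 1).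
    + simpl; lra.
    + cbn; lra.
    + intros n Hn; apply INR_le_ratio; [lia|].
      rewrite Nat.mul_1_l; now apply length_B_succ.
  - apply grows_exponentially_geometric with (gamma := INR 3 / INR 2).
    + simpl; lra.
    + cbn; lra.
    + intros n Hn; apply INR_le_ratio; [lia|now apply length_P_succ].
Qed.
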